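(* Let $\mathcal{A}=\langle Q,\Sigma,\delta\rangle$ be a semisimple synchronizing automaton with $n=|Q|$ states and former-rank $r=\mathrm{Fr}(\mathcal{A})\ge 2$. Then $\mathcal{A}$ has a reset word of length at most $(n-1)D(2,r,n)$. In particular, $\mathcal{A}$ has a reset word of length at most $\dfrac{n(n-1)^2}{r(r-1)}$.
   Context: An automaton $\mathcal{A}=\langle Q,\Sigma,\delta\rangle$ has finite state set $Q=\{q_1,\dots,q_n\}$, finite alphabet $\Sigma$ and transition function $\delta:Q\times\Sigma\to Q$; write $q\cdot u$ for the action of a word $u\in\Sigma^*$, extended to subsets of $Q$. A word $u$ is reset (synchronizing) if $|Q\cdot u|=1$; $\mathrm{Syn}(\mathcal{A})$ denotes the set of reset words, and $\mathcal{A}$ is synchronizing if $\mathrm{Syn}(\mathcal{A})\neq\emptyset$. Each word $u$ acts linearly on $\mathbb{C}Q$ (basis $Q$) by $q\mapsto q\cdot u$; this action preserves $w^\perp=\{x\in\mathbb{C}Q:\langle x,w\rangle=0\}$, where $w=q_1+\dots+q_n$, and $u$ is reset iff it acts as $0$ on $w^\perp$. Let $\rho:\Sigma^*\to \mathrm{End}(w^\perp)\cong\mathbb{M}_{n-1}(\mathbb{C})$ be the induced representation ($\rho(uv)=\rho(u)\rho(v)$), and let $\mathcal{R}$ be the $\mathbb{C}$-subalgebra of $\mathbb{M}_{n-1}(\mathbb{C})$ generated by $\rho(\Sigma^* )$, with Jacobson radical $\mathrm{Rad}(\mathcal{R})$. The set of radical words is $\mathrm{Rad}(\mathcal{A})=\rho^{-1}(\mathrm{Rad}(\mathcal{R}))\supseteq\mathrm{Syn}(\mathcal{A})$.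 A synchronizing automaton is semisimple if $\mathrm{Rad}(\mathcal{A})=\mathrm{Syn}(\mathcal{A})$ (equivalently $\mathrm{Rad}(\mathcal{R})\cap\rho(\Sigma^* )=\{0\}$). The former-rank is $\mathrm{Fr}(\mathcal{A})=\min\{|Q\cdot u|: u\in\Sigma^*\setminus\mathrm{Syn}(\mathcal{A})\}$. For integers $t,r\le n$, the packing number $D(t,r,n)$ is the maximum size of a family of $r$-element subsets of $[1,n]$ such that no $t$-element subset is contained in more than one member of the family. *)

From HB Require Import structures.
From mathcomp Require Import all_boot all_order all_algebra.
From mathcomp Require Import algC.

Set Implicit Arguments.
Unset Strict Implicit.
Unset Printing Implicit Defensive.

Import GRing.Theory Num.Theory.

Section Automaton.
Variables (n : nat) (Sigma : finType) (delta : 'I_n -> Sigma -> 'I_n).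

Definition act (q : 'I_n) (u : seq Sigma) : 'I_n := foldl delta q u.

Definition img (u : seq Sigma) : {set 'I_n} := [set act q u | q : 'I_n].

Definition is_reset (u : seq Sigma) : bool := #|img u| == 1%N.

Definition synchronizing : Prop := exists u, is_reset u.

(* Linear action of u on CQ, as a matrix acting on row vectors:
   the basis vector q is sent to q . u.  rho (u ++ v) = rho u *m rho v. *)
Definition rho (u : seq Sigma) : 'M[algC]_n :=
  \matrix_(i, j) ((act i u == j)%:R : algC)%R.

(* A matrix whose row space is w^perp = { x | <x, w> = 0 }, w = q_1 + ... + q_n. *)
Definition Wperp : 'M[algC]_n := kermx (const_mx 1%R : 'M[algC]_(n, 1)).

(* Two endomorphisms of CQ (stabilizing w^perp) induce the same endomorphism
   of w^perp. *)
Definition eqW (A B : 'M[algC]_n) : Prop := (Wperp *m A = Wperp *m B)%R.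

(* A represents an element of the subalgebra R generated by rho(Sigma^* ):
   since rho(Sigma^* ) is a monoid containing the identity, R is its linear span. *)
Definition inR (A : 'M[algC]_n) : Prop :=
  exists s : seq (algC * seq Sigma), (A = \sum_(p <- s) p.1 *: rho p.2)%R.

(* X (restricted to w^perp) is a unit of the algebra R. *)
Definition unitR (X : 'M[algC]_n) : Prop :=
  exists B, inR B /\ eqW (B *m X)%R (1%:M)%R /\ eqW (X *m B)%R (1%:M)%R.

(* X (restricted to w^perp) lies in the Jacobson radical Rad(R):
   1 - a x is a unit of R for every a in R. *)
Definition inRad (X : 'M[algC]_n) : Prop :=
  inR X /\ forall A, inR A -> unitR (1%:M - A *m X)%R.

Definition radical_word (u : seq Sigma) : Prop := inRad (rho u).

(* semisimple synchronizing automaton: Rad(A) = Syn(A)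
   (Syn(A) is always contained in Rad(A)). *)
Definition semisimple : Prop :=
  synchronizing /\ forall u, radical_word u -> is_reset u.

Definition is_former_rank (r : nat) : Prop :=
  (exists u, ~~ is_reset u /\ #|img u| = r) /\
  (forall u, ~~ is_reset u -> r <= #|img u|)%N.

End Automaton.

Definition packing (t r : nat) (n : nat) (F : {set {set 'I_n}}) : bool :=
  [forall B in F, #|B| == r] &&
  [forall T : {set 'I_n}, (#|T| == t) ==> (#|[set B in F | T \subset B]| <= 1)%N].

Definition D (t r n : nat) : nat :=
  \max_(F : {set {set 'I_n}} | packing t r F) #|F|.

(* If a word [y] is not reset, semisimplicity yields [v] with [y v y] not reset:
   otherwise [(A rho(y))^2] vanishes on [w^perp] for every [A] in the algebra, so
   [1 - A rho(y)] is invertible and [y] would be radical.  Sandwiching a non-reset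
   word of minimal rank in this way produces, inside the image of any non-reset
   word [x], a set on which every word is either injective or collapsing.  An
   [r]-subset [Z] of it is collapsed by some word, and along a shortest one the
   images of [Z] under the proper prefixes are [r]-sets pairwise meeting in at
   most one state, i.e. a 2-packing; so some word of length at most [D(2,r,n)]
   merges two states of [Q.x].  At most [n - 1] such merges reset the automaton,
   and counting ordered pairs of distinct states gives
   [D(2,r,n) r (r - 1) <= n (n - 1)]. *)

From Pilot Require Import Defs.
From mathcomp Require Import all_boot all_order all_algebra.
From mathcomp Require Import algC zify.
From Stdlib Require Import Classical Wf_nat.

Set Implicit Arguments.
Unset Strict Implicit.
Unset Printing Implicit Defensive.

Import GRing.Theory Num.Theory.

Lemma ex_argmin (A : Type) (P : A -> Prop) (f : A -> nat) :
  (exists x, P x) -> exists2 x, P x & forall y, P y -> f x <= f y.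
Proof.
move=> [x Px]; elim/(well_founded_ind (well_founded_ltof _ f)): x Px => x IHx Px.
have [[y Py /ltP lt_yx]|x_min] := classic (exists2 y, P y & f y < f x).
  exact: IHx lt_yx Py.
by exists x => // y Py; rewrite leqNgt; apply/negP => lt_yx; apply: x_min; exists y.
Qed.

Section Automaton.
Variables (n : nat) (Sigma : finType) (delta : 'I_n -> Sigma -> 'I_n).
Local Notation act := (act delta).
Local Notation img := (img delta).
Local Notation is_reset := (is_reset delta).
Local Notation rho := (rho delta).
Implicit Types (S T : {set 'I_n}) (u v w x y : seq Sigma).

Definition actS S w := [set act q w | q in S].

Lemma act_cat q u v : act q (u ++ v) = act (act q u) v.
Proof. exact: foldl_cat. Qed.

Lemma actS_cat S u v : actS S (u ++ v) = actS (actS S u) v.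
Proof. by rewrite /actS -imset_comp; apply: eq_imset => q; rewrite /= act_cat. Qed.

Lemma img_actS u : img u = actS [set: 'I_n] u.
Proof. by apply/setP => q; apply/imsetP/imsetP => -[p _ ->]; exists p. Qed.

Lemma img_cat u v : img (u ++ v) = actS (img u) v.
Proof. by rewrite !img_actS actS_cat. Qed.

Lemma img_catl u v : img (u ++ v) \subset img v.
Proof. by rewrite img_cat [img v]img_actS imsetS ?subsetT. Qed.

Lemma card_actS S u : #|actS S u| <= #|S|.
Proof. exact: leq_imset_card. Qed.

Lemma card_actS_reset S g : is_reset g -> #|actS S g| <= 1.
Proof. by move/eqP <-; rewrite img_actS subset_leq_card ?imsetS ?subsetT. Qed.

Lemma card_actS_lt S T w :
  T \subset S -> 1 < #|T| -> #|actS T w| <= 1 -> #|actS S w| < #|S|.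
Proof.
move=> TS T_gt1 T_collapses; rewrite ltn_neqAle card_actS andbT.
apply/imset_injP => inj_S; suff: #|actS T w| = #|T| by lia.
by apply: card_in_imset => a b /(subsetP TS) aS /(subsetP TS) bS; apply: inj_S.
Qed.

Lemma synchronizing_n_gt0 : synchronizing delta -> 0 < n.
Proof. by case=> u /eqP img1; have := max_card (img u); rewrite img1 card_ord. Qed.

Definition critical S := forall w, #|actS S w| = #|S| \/ #|actS S w| <= 1.

Lemma critical_subset S T : critical S -> T \subset S -> critical T.
Proof.
move=> critS TS w; case: (critS w) => [/eqP/imset_injP inj_S | S_collapses].
  by left; apply: card_in_imset => a b /(subsetP TS) aS /(subsetP TS) bS; apply: inj_S.
by right; apply: leq_trans (subset_leq_card (imsetS _ TS)) S_collapses.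
Qed.

Lemma critical_actS S u : critical S -> #|actS S u| = #|S| -> critical (actS S u).
Proof. by move=> critS inj_u w; rewrite -actS_cat inj_u; apply: critS. Qed.

Section ShortestCollapsingWord.
Variables (Z : {set 'I_n}) (w : seq Sigma).
Hypotheses (critZ : critical Z) (Z_gt1 : 1 < #|Z|).
Hypothesis w_collapses : #|actS Z w| <= 1.
Hypothesis w_shortest : forall w', #|actS Z w'| <= 1 -> size w <= size w'.

Lemma card_actS_take i : i < size w -> #|actS Z (take i w)| = #|Z|.
Proof.
move=> lt_i; case: (critZ (take i w)) => // /w_shortest.
by rewrite size_take lt_i leqNgt lt_i.
Qed.

(* If two states survive in both [Z.w_{<i}] and [Z.w_{<j}], the suffix [w_{>=j}]
   merges them, hence collapses the critical set [Z.w_{<i}]: cutting out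
   [w_{i..j-1}] would give a shorter collapsing word. *)
Lemma card_actS_take_meet i j : i < j -> j < size w ->
  #|actS Z (take i w) :&: actS Z (take j w)| <= 1.
Proof.
move=> lt_ij lt_j; have lt_i := ltn_trans lt_ij lt_j.
rewrite leqNgt; apply/negP => /card_gt1P[a [b [/setIP[ai aj] /setIP[bi bj] ab]]].
have merged : act a (drop j w) = act b (drop j w).
  have : #|actS (actS Z (take j w)) (drop j w)| <= 1.
    by rewrite -actS_cat cat_take_drop.
  by move/card_le1_eqP; apply; apply: imset_f.
have : #|actS (actS Z (take i w)) (drop j w)| <= 1.
  have [/eqP/imset_injP inj|//] := critical_actS critZ (card_actS_take lt_i) (drop j w).
  by move: ab; rewrite (inj a b ai bi merged) eqxx.
rewrite -actS_cat => /w_shortest; rewrite size_cat size_take lt_i size_drop; lia.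
Qed.

Lemma card_actS_take_neq i j : i != j -> i < size w -> j < size w ->
  #|actS Z (take i w) :&: actS Z (take j w)| <= 1.
Proof.
case: (ltngtP i j) => // [lt_ij | lt_ji] _ lt_i lt_j; first exact: card_actS_take_meet.
by rewrite setIC; apply: card_actS_take_meet.
Qed.

Let prefix_images := [set actS Z (take i w) | i : 'I_(size w)].

Lemma card_prefix_images : #|prefix_images| = size w.
Proof.
rewrite card_imset ?card_ord // => i j eq_ij; apply/val_inj/eqP; apply: contraT => ne_ij.
have := card_actS_take_neq ne_ij (ltn_ord i) (ltn_ord j).
by rewrite eq_ij setIid card_actS_take // leqNgt Z_gt1.
Qed.

Lemma prefix_images_packing : packing 2 #|Z| prefix_images.
Proof.
apply/andP; split.
  by apply/forall_inP => _ /imsetP[i _ ->]; rewrite card_actS_take.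
apply/forallP => T; apply/implyP => /eqP card_T; rewrite leqNgt; apply/negP.
case/card_gt1P => _ [_ [/setIdP[/imsetP[i _ ->] Ti] /setIdP[/imsetP[j _ ->] Tj] ne_ij]].
have ne_ij' : val i != val j by apply: contraNneq ne_ij => /val_inj ->.
have := card_actS_take_neq ne_ij' (ltn_ord i) (ltn_ord j).
by move/(leq_trans (subset_leq_card (setISS Ti Tj))); rewrite setIid card_T.
Qed.

Lemma size_shortest_collapsing : size w <= D 2 #|Z| n.
Proof.
by rewrite -card_prefix_images; apply: (leq_bigmax_cond _ prefix_images_packing).
Qed.

End ShortestCollapsingWord.

Lemma exists_short_collapsing_word Z g :
    critical Z -> 1 < #|Z| -> is_reset g ->
  exists2 w, #|actS Z w| <= 1 & size w <= D 2 #|Z| n.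
Proof.
move=> critZ Z_gt1 /(card_actS_reset Z) g_collapses.
have [w w_collapses w_shortest] :=
  @ex_argmin _ (fun w => #|actS Z w| <= 1) size (ex_intro _ g g_collapses).
by exists w => //; apply: size_shortest_collapsing.
Qed.

Section PositiveStates.
Hypothesis n_gt0 : 0 < n.

Lemma is_resetE u : is_reset u = (#|img u| <= 1).
Proof.
have img_gt0 : 0 < #|img u|.
  by rewrite card_gt0; apply/set0Pn; exists (act (Ordinal n_gt0) u); apply: imset_f.
by rewrite /Defs.is_reset eqn_leq img_gt0 andbT.
Qed.

Lemma is_reset_catl u v : is_reset v -> is_reset (u ++ v).
Proof. by rewrite !is_resetE => /(leq_trans (subset_leq_card (img_catl u v))). Qed.

Lemma is_reset_catr u v : is_reset u -> is_reset (u ++ v).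
Proof. by rewrite !is_resetE img_cat => /(leq_trans (card_actS _ _)). Qed.

Section RadicalWords.
Local Open Scope ring_scope.
Local Notation W := (Wperp n).

Definition rho_comb (s : seq (algC * seq Sigma)) : 'M[algC]_n :=
  \sum_(p <- s) p.1 *: rho p.2.

Lemma rho_cat u v : rho (u ++ v) = rho u *m rho v.
Proof.
apply/matrixP => i j; rewrite !mxE (bigD1 (act i u)) //= mxE eqxx mul1r.
rewrite big1 ?addr0; first by rewrite mxE act_cat.
by move=> k; rewrite mxE eq_sym => /negbTE ->; rewrite mul0r.
Qed.

Lemma rho_nil : rho [::] = 1%:M.
Proof. by apply/matrixP => i j; rewrite !mxE. Qed.

Lemma rho_comb1 u : rho_comb [:: (1, u)] = rho u.
Proof. by rewrite /rho_comb big_seq1 scale1r. Qed.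

Lemma rho_combM s t :
  rho_comb s *m rho_comb t = rho_comb [seq (p.1 * q.1, p.2 ++ q.2) | p <- s, q <- t].
Proof.
rewrite /rho_comb big_allpairs_dep /= mulmx_suml; apply: eq_bigr => p _.
rewrite -scalemxAl mulmx_sumr scaler_sumr; apply: eq_bigr => q _.
by rewrite -scalemxAr scalerA rho_cat.
Qed.

(* A reset word sends every state to one state [s], so [rho w] factors through
   the all-ones column, which vanishes on [w^perp]. *)
Lemma Wperp_rho_reset w : is_reset w -> W *m rho w = 0.
Proof.
case/cards1P => s img_w.
have act_w k : act k w = s by apply/set1P; rewrite -img_w; apply: imset_f.
have -> : rho w = const_mx 1 *m delta_mx (ord0 : 'I_1) s.
  by apply/matrixP => i j; rewrite !mxE big_ord1 !mxE act_w mul1r eq_sym.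
by rewrite mulmxA mulmx_ker mul0mx.
Qed.

Lemma Wperp_rho_comb_reset s t : (forall q, q \in t -> is_reset q.2) ->
  W *m (rho_comb s *m rho_comb t) = 0.
Proof.
move=> t_reset; rewrite rho_combM /rho_comb mulmx_sumr big_seq big1 // => pq.
case/allpairsP => -[p q] [_ qt ->] /=.
by rewrite -scalemxAr Wperp_rho_reset ?scaler0 // is_reset_catl // t_reset.
Qed.

(* For [A] in the algebra, [X = A rho(y)] satisfies [X^2 = A (rho(y) A rho(y))],
   a combination of reset words on [w^perp]; so [1 + X] inverts [1 - X]. *)
Lemma sandwich_reset_radical y :
  (forall v, is_reset (y ++ v ++ y)) -> radical_word delta y.
Proof.
move=> yvy_reset; split; first by exists [:: (1, y)]; rewrite -/(rho_comb _) rho_comb1.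
move=> _ [s ->]; set X := rho_comb s *m rho y.
have sandwich : rho y *m rho_comb s *m rho y = rho_comb [seq (p.1, y ++ p.2 ++ y) | p <- s].
  rewrite /rho_comb big_map mulmx_sumr mulmx_suml; apply: eq_bigr => p _.
  by rewrite -scalemxAr -scalemxAl !rho_cat mulmxA.
have XX0 : W *m (X *m X) = 0.
  rewrite (_ : X *m X = rho_comb s *m (rho y *m rho_comb s *m rho y)); last by rewrite !mulmxA.
  by rewrite sandwich Wperp_rho_comb_reset // => _ /mapP[p _ ->]; apply: yvy_reset.
exists (1%:M + X); split; last split.
- exists ((1, [::]) :: [seq (p.1 * q.1, p.2 ++ q.2) | p <- s, q <- [:: (1, y)]]).
  by rewrite big_cons -/(rho_comb _) -rho_combM rho_comb1 scale1r rho_nil.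
- by rewrite /eqW mulmxDl mul1mx (mulmxBr X) mulmx1 addrA subrK (mulmxBr W) XX0 subr0.
- by rewrite /eqW mulmxBl mul1mx (mulmxDr X) mulmx1 opprD addrA addrK (mulmxBr W) XX0 subr0.
Qed.

End RadicalWords.

(* With [y = s x t] a non-reset word of minimal rank among those containing the
   factor [x], and [y v y] non-reset, every word [w] either resets [y v s x w] or
   keeps its rank at least that of [y], i.e. is injective on [Q.(y v s x)]. *)
Lemma exists_critical_image x :
    (forall y, ~~ is_reset y -> exists v, ~~ is_reset (y ++ v ++ y)) ->
    ~~ is_reset x ->
  exists z, [/\ ~~ is_reset z, img z \subset img x & critical (img z)].
Proof.
move=> sandwich x_nreset.
have has_x : exists p : seq Sigma * seq Sigma, ~~ is_reset (p.1 ++ x ++ p.2).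
  by exists ([::], [::]); rewrite /= cats0.
have [[s t] /= y_nreset y_min] := ex_argmin (fun p => #|img (p.1 ++ x ++ p.2)|) has_x.
set y := s ++ x ++ t in y_nreset y_min.
have [v yvy_nreset] := sandwich y y_nreset.
exists ((y ++ v ++ s) ++ x); split.
- apply: contra yvy_nreset => /(is_reset_catr t).
  by rewrite /y -!catA.
- exact: img_catl.
- move=> w; rewrite -img_cat.
  have [zw_reset | zw_nreset] := boolP (is_reset ((y ++ v ++ s) ++ x ++ w)).
    by right; rewrite -is_resetE -catA.
  left; apply/eqP; rewrite eqn_leq {1}img_cat card_actS /=.
  have := y_min (y ++ v ++ s, w) zw_nreset; rewrite /= (catA _ x w).
  by apply: leq_trans; rewrite -(catA y) (img_cat y) card_actS.
Qed.

Lemma semisimple_sandwich y :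
  semisimple delta -> ~~ is_reset y -> exists v, ~~ is_reset (y ++ v ++ y).
Proof.
case=> _ radical_reset /negP y_nreset; apply: NNPP => no_v.
apply/y_nreset/radical_reset/sandwich_reset_radical => v.
by apply/negPn/negP => yvy_nreset; apply: no_v; exists v.
Qed.

Section SemisimpleAutomaton.
Variable r : nat.
Hypotheses (ss : semisimple delta) (Fr : is_former_rank delta r) (r_gt1 : 1 < r).

Lemma shorten_image x :
  ~~ is_reset x -> exists2 w, size w <= D 2 r n & #|img (x ++ w)| < #|img x|.
Proof.
move=> x_nreset; have [g g_reset] := ss.1.
have [z [z_nreset zx crit_z]] :=
  exists_critical_image (fun y => semisimple_sandwich ss) x_nreset.
have /card_geqP[sZ [uniq_sZ size_sZ sZ_z]] := Fr.2 z z_nreset.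
have card_Z : #|[set q in sZ]| = r by rewrite cardsE (card_uniqP uniq_sZ).
have Zz : [set q in sZ] \subset img z by apply/subsetP => q; rewrite inE; apply: sZ_z.
have Z_gt1 : 1 < #|[set q in sZ]| by rewrite card_Z.
have [w Z_collapses] :=
  exists_short_collapsing_word (critical_subset crit_z Zz) Z_gt1 g_reset.
rewrite card_Z => w_short; exists w => //.
by rewrite img_cat (card_actS_lt (subset_trans Zz zx) Z_gt1 Z_collapses).
Qed.

Lemma reset_extension x k :
  #|img x| <= k.+1 -> exists2 u, is_reset (x ++ u) & size u <= k * D 2 r n.
Proof.
elim: k x => [|k IHk] x img_x; first by exists [::]; rewrite ?cats0 ?is_resetE.
have [x_reset | x_nreset] := boolP (is_reset x); first by exists [::]; rewrite ?cats0.
have [w w_short lt_img] := shorten_image x_nreset.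
have [u xwu_reset u_short] := IHk (x ++ w) (leq_trans lt_img img_x).
exists (w ++ u); first by rewrite catA.
by rewrite size_cat mulSn leq_add.
Qed.

End SemisimpleAutomaton.
End PositiveStates.
End Automaton.

Definition offdiag (T : finType) (B : {set T}) : {set T * T} :=
  [set p in setX B B | p.1 != p.2].

Lemma in_offdiag (T : finType) (B : {set T}) p :
  (p \in offdiag B) = [&& p.1 \in B, p.2 \in B & p.1 != p.2].
Proof. by case: p => a b; rewrite inE in_setX andbA. Qed.

Lemma card_offdiag (T : finType) (B : {set T}) : #|offdiag B| = #|B| * (#|B| - 1).
Proof.
have -> : offdiag B = setX B B :\: [set (a, a) | a in B].
  apply/setP => -[a b]; rewrite !inE /=; apply/andP/andP => [[/andP[aB bB] ab]|].
    by split; [apply: contraNN ab => /imsetP[c _ [-> ->]] | rewrite aB].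
  case=> ab /andP[aB bB]; split; first by rewrite aB.
  by apply: contraNN ab => /eqP ->; apply: imset_f.
have diag_sub : [set (a, a) | a in B] \subset setX B B.
  by apply/subsetP => _ /imsetP[a aB ->]; rewrite in_setX aB.
rewrite cardsD (setIidPr diag_sub) cardsX card_imset => [|a b [] //].
by rewrite mulnBr muln1.
Qed.

(* Double counting of the ordered pairs of distinct points: each member of the
   packing contains [r (r - 1)] of them, and no pair lies in two members. *)
Lemma packing2_card_bound n r (F : {set {set 'I_n}}) :
  packing 2 r F -> #|F| * (r * (r - 1)) <= n * (n - 1).
Proof.
case/andP => /forall_inP card_F /forallP pair_F.
have -> : #|F| * (r * (r - 1)) = \sum_(B in F) \sum_p (p \in offdiag B).
  rewrite -sum_nat_const; apply: eq_bigr => B /card_F/eqP <-.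
  by rewrite -card_offdiag -sum1_card big_mkcond; apply: eq_bigr => p _; case: ifP.
have -> : n * (n - 1) = #|offdiag [set: 'I_n]| by rewrite card_offdiag cardsT card_ord.
rewrite -sum1_card [X in _ <= X]big_mkcond exchange_big; apply: leq_sum => -[a b] _ /=.
rewrite in_offdiag !inE /=; case: eqVneq => [-> | ab] /=.
  by rewrite big1 // => B _; rewrite in_offdiag eqxx !andbF.
have pair_ab := pair_F [set a; b]; rewrite cards2 ab /= in pair_ab.
apply: leq_trans pair_ab; rewrite -sum1dep_card big_mkcond [X in _ <= X]big_mkcond /=.
apply: leq_sum => B _; rewrite in_offdiag ab subUset !sub1set andbT.
by case: (B \in F); case: (a \in B); case: (b \in B).
Qed.

Lemma D2_bound r n : 1 < r -> D 2 r n * (r * (r - 1)) <= n * (n - 1).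
Proof.
move=> r_gt1; have rr1_gt0 : 0 < r * (r - 1) by rewrite muln_gt0; apply/andP; lia.
rewrite -leq_divRL //; apply/bigmax_leqP => F packF.
by rewrite leq_divRL // packing2_card_bound.
Qed.

Theorem mainTheorem1 (n : nat) (Sigma : finType) (delta : 'I_n -> Sigma -> 'I_n)
    (r : nat) :
  semisimple delta -> is_former_rank delta r -> (2 <= r)%N ->
  exists u : seq Sigma,
    [/\ is_reset delta u,
        (size u <= (n - 1) * D 2 r n)%N &
        ((size u)%:R <= ((n * (n - 1) ^ 2)%N)%:R / ((r * (r - 1))%N)%:R :> rat)%R].
Proof.
move=> ss Fr r_gt1; have n_gt0 := synchronizing_n_gt0 ss.1.
have img_nil : #|img delta [::]| <= (n - 1).+1.
  by rewrite subn1 prednK // -[X in _ <= X](card_ord n) max_card.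
have [u reset_u size_u] := reset_extension n_gt0 ss Fr r_gt1 img_nil.
exists u; split => //.
have rr1_gt0 : 0 < r * (r - 1) by rewrite muln_gt0; apply/andP; lia.
rewrite ler_pdivlMr ?ltr0n // -natrM ler_nat.
apply: leq_trans (leq_mul size_u (leqnn _)) _.
by rewrite -mulnA expnS expn1 [X in _ <= X]mulnCA leq_mul2l D2_bound ?orbT.
Qed.
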